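(* Let $\gamma_1,\gamma_2>0$ and consider the birth-death chain RDS $(\theta,\varphi)$ on $\mathbb{N}_0$ described in the context. Let $W_0=\{0,2,4,\dots\}$ and $W_1=\{1,3,5,\dots\}$. Then $(\theta,\varphi)$ is partially synchronizing with partition $\{W_0,W_1\}$: for each $i\in\{0,1\}$ and all $x,y\in W_i$, for $\mathbb{P}$-a.e. $q\in\mathcal{Q}_+$ there exists $n_0=n_0(x,y,q)\in\mathbb{N}_0$ with $\varphi^{n_0}_q(x)=\varphi^{n_0}_q(y)$.
   Context: Noise space: $\mathcal{Q}_+=\{q=(q_n)_{n\in\mathbb{N}_0}: q_n\in[0,1]\}$ with the product Borel $\sigma$-algebra and the product measure $\mathbb{P}=\lambda^{\mathbb{N}_0}$, $\lambda$ Lebesgue measure on $[0,1]$; shift $\theta(q_0,q_1,\dots)=(q_1,q_2,\dots)$. For $q\in\mathcal{Q}_+$ define $f_q:\mathbb{N}_0\to\mathbb{N}_0$ by $f_q(x)=x+1$ if $q_0<\frac{\gamma_1}{\gamma_1+\gamma_2x}$ and $f_q(x)=x-1$ otherwise. The cocycle is $\varphi^0_q(x)=x$ and $\varphi^n_q(x)=f_{\theta^{n-1}q}\circ\cdots\circ f_q(x)$ for $n\geq1$. An RDS is called synchronizing in $S$ if for every $x,y\in S$ and $\mathbb{P}$-a.e. $q$ there is $n_0$ with $\varphi^{n_0}_q(x)=\varphi^{n_0}_q(y)$; it is partially synchronizing with partition $\{W_0,\dots,W_{p-1}\}$ of the state space if it is synchronizing in each $W_i$. *)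

From HB Require Import structures.
From mathcomp Require Import all_boot all_order all_algebra.
From mathcomp Require Import all_classical all_reals all_analysis.
Set Implicit Arguments. Unset Strict Implicit. Unset Printing Implicit Defensive.
Import Order.TTheory GRing.Theory Num.Theory.
Local Open Scope classical_set_scope.
Local Open Scope ring_scope.

(* Noise space Q_+ : sequences (q_n)_{n in N0} of reals.  The product measure
   below is concentrated on [0,1]^N0 (see noise_law), so this is Q_+ up to a
   null set. *)
Definition noise (R : realType) := nat -> R.
HB.instance Definition _ (R : realType) := Choice.on (noise R).
HB.instance Definition _ (R : realType) := isPointed.Build (noise R) (fun _ => 0%R).

Definition coord_sets (R : realType) : set (set (noise R)) :=
  [set A | exists n (B : set R), measurable B /\ A = (fun q : noise R => q n) @^-1` B].

Notation Qspace R := (g_sigma_algebraType (@coord_sets R)).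

(* P is the product measure lambda^{N0} (lambda = Lebesgue measure on [0,1]):
   it is a probability measure whose value on every finite-dimensional
   cylinder {q | q_i in B_i, i < n} is prod_{i<n} lambda(B_i /\ [0,1]).
   This characterizes lambda^{N0} uniquely (pi-lambda theorem). *)
Definition noise_law (R : realType) (P : {measure set (Qspace R) -> \bar R}) : Prop :=
  P setT = 1%E /\
  forall (n : nat) (B : 'I_n -> set R), (forall i, measurable (B i)) ->
    P [set q : Qspace R | forall i : 'I_n, B i (q i)] =
    (\prod_(i < n) (@lebesgue_measure R) (B i `&` `[0%R, 1%R]))%E.

Definition theta (R : realType) (q : noise R) : noise R := fun k => q k.+1.

(* f_q(x) = x+1 if q_0 < g1/(g1+g2 x), x-1 otherwise (nat subtraction; the
   case x = 0, q_0 >= 1 only occurs on a null set) *)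
Definition fq (R : realType) (g1 g2 : R) (q : noise R) (x : nat) : nat :=
  if q 0%N < g1 / (g1 + g2 * x%:R) then x.+1 else x.-1.

Fixpoint phi (R : realType) (g1 g2 : R) (n : nat) (q : noise R) (x : nat) : nat :=
  match n with
  | 0 => x
  | n'.+1 => fq g1 g2 (iter n' (@theta R) q) (phi g1 g2 n' q x)
  end.

Definition synchronizing (R : realType) (P : {measure set (Qspace R) -> \bar R})
  (cocycle : nat -> noise R -> nat -> nat) (S : set nat) : Prop :=
  forall x y, S x -> S y ->
    {ae P, forall q : Qspace R, exists n0 : nat, cocycle n0 q x = cocycle n0 q y}.

Definition partially_synchronizing (R : realType)
  (P : {measure set (Qspace R) -> \bar R})
  (cocycle : nat -> noise R -> nat -> nat) (p : nat) (W : 'I_p -> set nat) : Prop :=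
  ((forall x : nat, exists i, W i x) /\
   (forall i j x, W i x -> W j x -> i = j) /\
   (forall i, W i !=set0)) /\
  forall i, synchronizing P cocycle (W i).

Definition W01 (i : 'I_2) : set nat := [set x : nat | odd x = (val i == 1%N)].

From HB Require Import structures.
From mathcomp Require Import all_boot all_order all_algebra.
From mathcomp Require Import all_classical all_reals all_analysis.
From mathcomp Require Import ring lra.
Import Order.TTheory GRing.Theory Num.Theory.
Import numFieldNormedType.Exports.
Local Open Scope classical_set_scope.
Local Open Scope ring_scope.
Set Implicit Arguments. Unset Strict Implicit. Unset Printing Implicit Defensive.

(* For noise with every q_k < 1, the cocycle preserves the order and the parity
   of two starting points of equal parity, so the two trajectories meet as soon
   as the upper one enters {0, 1}.  Failing to synchronize therefore forces the
   upper trajectory to avoid {0, 1} forever.  The probability h(y) of that event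
   is harmonic for the birth-death chain on y >= 2 and vanishes on {0, 1}; the
   harmonic equation p(y)(h(y+1) - h(y)) = (1 - p(y))(h(y) - h(y-1)) together
   with p(y) <= 1/2 for large y makes the increments of h eventually
   nondecreasing, which is compatible with h <= 1 only if h = 0.  The product
   structure of P bounds the measure of the N-step survival event by the N-step
   survival probability of the chain, and the events q_k >= 1 are null. *)

Lemma bounded_increment_le0 (R : archiFieldType) (u : nat -> R) (B : R) (M : nat) :
  (forall n, u n <= B) ->
  (forall n, (M <= n)%N -> u n.+1 - u n <= u n.+2 - u n.+1) ->
  u M.+1 - u M <= 0.
Proof.
move=> uB incr; set d := u M.+1 - u M.
have d_le k : d <= u (M + k).+1 - u (M + k)%N.
  elim: k => [|k IH]; first by rewrite addn0.
  by apply: le_trans IH _; rewrite addnS; apply: incr; rewrite leq_addr.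
have grow k : u M + k%:R * d <= u (M + k)%N.
  elim: k => [|k IH]; first by rewrite mul0r addr0 addn0.
  have := d_le k; rewrite addnS mulrSr mulrDl mul1r; lra.
rewrite leNgt; apply/negP => d_gt0.
pose k := Num.bound ((B - u M) / d).
have : (B - u M) / d < k%:R.
  by apply/archi_boundP/divr_ge0; [rewrite subr_ge0 | exact: ltW].
rewrite ltr_pdivrMr // => k_big.
have := le_trans (grow k) (uB _); lra.
Qed.

Section BirthDeathCocycle.
Variables (R : realType) (g1 g2 : R).
Hypotheses (g1_gt0 : 0 < g1) (g2_gt0 : 0 < g2).

Definition birth_prob (y : nat) : R := g1 / (g1 + g2 * y%:R).

Lemma birth_prob_den_gt0 y : 0 < g1 + g2 * y%:R.
Proof. by rewrite ltr_wpDr // mulr_ge0 // ltW. Qed.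

Lemma birth_prob_gt0 y : 0 < birth_prob y.
Proof. by rewrite divr_gt0 // birth_prob_den_gt0. Qed.

Lemma birth_prob_le1 y : birth_prob y <= 1.
Proof.
by rewrite ler_pdivrMr ?birth_prob_den_gt0 // mul1r lerDl mulr_ge0 // ltW.
Qed.

Lemma birth_prob0 : birth_prob 0 = 1.
Proof. by rewrite /birth_prob mulr0 addr0 divff // gt_eqF. Qed.

Lemma birth_prob_lt1 y : (0 < y)%N -> birth_prob y < 1.
Proof.
move=> y_gt0; rewrite ltr_pdivrMr ?birth_prob_den_gt0 // mul1r ltrDl.
by rewrite mulr_gt0 // ltr0n.
Qed.

Lemma birth_prob_le_half : exists M, forall y, (M <= y)%N -> birth_prob y <= 2^-1.
Proof.
exists (Num.bound (g1 / g2)) => y My.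
have : g1 / g2 < y%:R.
  apply: lt_le_trans (archi_boundP _) _; first by rewrite divr_ge0 // ltW.
  by rewrite ler_nat.
rewrite ltr_pdivrMr // => g1_lt.
rewrite ler_pdivrMr ?birth_prob_den_gt0 //; lra.
Qed.

Lemma fqE (q : noise R) x :
  fq g1 g2 q x = if q 0%N < birth_prob x then x.+1 else x.-1.
Proof. by []. Qed.

Lemma fq_le (q : noise R) x : (fq g1 g2 q x <= x.+1)%N.
Proof. by rewrite fqE; case: ifP => // _; rewrite (leq_trans (leq_pred x)). Qed.

Lemma fq_ge (q : noise R) x : (x.-1 <= fq g1 g2 q x)%N.
Proof. by rewrite fqE; case: ifP => // _; rewrite (leq_trans (leq_pred x)). Qed.

(* Since birth_prob 0 = 1, q_0 < 1 rules out the truncated step 0.-1 = 0. *)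
Lemma odd_fq (q : noise R) x : q 0%N < 1 -> odd (fq g1 g2 q x) = ~~ odd x.
Proof.
move=> q1; rewrite fqE; case: ifPn => //; case: x => [|x] /=; last by rewrite negbK.
by rewrite birth_prob0 q1.
Qed.

Lemma fq_homo_parity (q : noise R) x y : (x <= y)%N -> odd x = odd y ->
  (fq g1 g2 q x <= fq g1 g2 q y)%N.
Proof.
rewrite leq_eqVlt => /orP[/eqP -> //| xy] oxy.
have x2y : (x.+2 <= y)%N.
  move: xy; rewrite leq_eqVlt => /orP[/eqP yE|//].
  by move: oxy; rewrite -yE /=; case: (odd x).
apply: leq_trans (fq_le _ _) _; apply: leq_trans (fq_ge _ _).
by rewrite -ltnS (ltn_predK xy).
Qed.

Lemma iter_theta k (q : noise R) i : iter k (@theta R) q i = q (i + k)%N.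
Proof. by elim: k i => [|k IH] i /=; rewrite ?addn0 // /theta IH addnS. Qed.

Lemma phiS n (q : noise R) y :
  phi g1 g2 n.+1 q y = phi g1 g2 n (theta q) (fq g1 g2 q y).
Proof. by elim: n y => [|n IH] y //=; rewrite -IH /= -iterS iterSr. Qed.

Lemma phi_homo_parity (q : noise R) x y : (forall k, q k < 1) ->
  (x <= y)%N -> odd x = odd y -> forall n,
  (phi g1 g2 n q x <= phi g1 g2 n q y)%N /\
  odd (phi g1 g2 n q x) = odd (phi g1 g2 n q y).
Proof.
move=> q1 xy oxy; elim=> [|n [le_n odd_n]] //=.
have q1n : iter n (@theta R) q 0%N < 1 by rewrite iter_theta.
by rewrite fq_homo_parity // !odd_fq // odd_n.
Qed.

Lemma phi_ge2_of_no_meet (q : noise R) x y : (forall k, q k < 1) ->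
  (x <= y)%N -> odd x = odd y ->
  ~ (exists n, phi g1 g2 n q x = phi g1 g2 n q y) ->
  forall n, (2 <= phi g1 g2 n q y)%N.
Proof.
move=> q1 xy oxy no_meet n; have [le_n odd_n] := phi_homo_parity q1 xy oxy n.
rewrite leqNgt; apply/negP => lt2; apply: no_meet; exists n.
move: le_n odd_n lt2.
by case: (phi g1 g2 n q y) => [|[|]] //; case: (phi g1 g2 n q x) => [|[|]].
Qed.

End BirthDeathCocycle.

Section Survival.
Variables (R : realType) (p : nat -> R).
Hypotheses (p_gt0 : forall y, 0 < p y) (p_le1 : forall y, p y <= 1).

(* The probability that the birth-death chain with up-probabilities [p],
   started at [y], stays above 1 during its first [N] steps. *)
Fixpoint survival (N y : nat) : R :=
  if (y < 2)%N then 0 else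
  if N is N'.+1 then p y * survival N' y.+1 + (1 - p y) * survival N' y.-1
  else 1.

Lemma survivalS N y : survival N.+1 y =
  if (y < 2)%N then 0 else p y * survival N y.+1 + (1 - p y) * survival N y.-1.
Proof. by []. Qed.

Lemma survival_ge0 N y : 0 <= survival N y.
Proof.
elim: N y => [|N IH] y /=; case: ifP => // _.
by rewrite addr_ge0 // mulr_ge0 // ?subr_ge0 // ltW.
Qed.

Lemma survival_le1 N y : survival N y <= 1.
Proof.
elim: N y => [|N IH] y /=; case: ifP => // _.
have := IH y.+1; have := IH y.-1; have := p_le1 y.
have := survival_ge0 N y.+1; have := survival_ge0 N y.-1; have := p_gt0 y.
nra.
Qed.

Lemma survival_nonincreasing y : nonincreasing_seq (survival ^~ y).
Proof.
apply/nonincreasing_seqP => N; elim: N y => [|N IH] y.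
  have [y2|y2] := ltnP y 2; first by rewrite survivalS [survival 0 y]/= y2.
  by rewrite [survival 0 y]/= ltnNge y2 survival_le1.
rewrite !(survivalS N.+1) !(survivalS N); case: ifP => // _.
by rewrite lerD // ler_wpM2l ?IH // ?subr_ge0 // ltW.
Qed.

Lemma survival_cvg y : cvgn (survival ^~ y).
Proof.
apply: nonincreasing_is_cvgn; first exact: survival_nonincreasing.
by exists 0 => _ [N _ <-]; exact: survival_ge0.
Qed.

Definition escape (y : nat) : R := limn (survival ^~ y).

Lemma escape_le_survival y N : escape y <= survival N y.
Proof. exact: nonincreasing_cvgn_ge (survival_nonincreasing y) (@survival_cvg y) N. Qed.

Lemma escape_ge0 y : 0 <= escape y.
Proof.
by apply: limr_ge; [exact: survival_cvg | apply: nearW => N; exact: survival_ge0].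
Qed.

Lemma escape_le1 y : escape y <= 1.
Proof. exact: le_trans (escape_le_survival y 0) (survival_le1 0 y). Qed.

Lemma escape_lt2 y : (y < 2)%N -> escape y = 0.
Proof.
move=> y2; apply/eqP; rewrite eq_le escape_ge0 andbT.
by apply: le_trans (escape_le_survival y 0) _; rewrite /= y2.
Qed.

Lemma escape_harmonic y : (2 <= y)%N ->
  escape y = p y * escape y.+1 + (1 - p y) * escape y.-1.
Proof.
move=> y2.
have step : (survival ^~ y) \o S =
            (fun N => p y * survival N y.+1 + (1 - p y) * survival N y.-1).
  by apply: funext => N /=; rewrite ltnNge y2.
have : (survival ^~ y) \o S @ \oo --> escape y.
  by rewrite cvg_shiftS; exact: survival_cvg.
rewrite step => /(cvg_lim (@Rhausdorff R)) <-; apply: (cvg_lim (@Rhausdorff R)).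
by apply: cvgD; apply: cvgMr; exact: survival_cvg.
Qed.

Lemma escape_increment y : (2 <= y)%N ->
  p y * (escape y.+1 - escape y) = (1 - p y) * (escape y - escape y.-1).
Proof. by move=> y2; rewrite (escape_harmonic y2); ring. Qed.

Hypothesis p_lt1 : forall y, (2 <= y)%N -> p y < 1.
Hypothesis p_le_half : exists M, forall y, (M <= y)%N -> p y <= 2^-1.

Lemma escape2 : escape 2 = 0.
Proof.
apply/eqP; rewrite eq_le escape_ge0 andbT leNgt; apply/negP => e2_gt0.
have incr_gt0 y : (0 < y)%N -> 0 < escape y.+1 - escape y.
  elim: y => // -[_ _|y IH _]; first by rewrite (@escape_lt2 1) // subr0.
  have := escape_increment (y := y.+2) isT; have := IH isT.
  have := p_gt0 y.+2; have := p_lt1 (y := y.+2) isT; nra.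
have [M p_small] := p_le_half.
suff : escape M.+2 - escape M.+1 <= 0 by rewrite leNgt incr_gt0.
apply: (bounded_increment_le0 escape_le1) => n Mn.
have n_gt0 : (0 < n)%N := leq_ltn_trans (leq0n M) Mn.
have := escape_increment (n_gt0 : (2 <= n.+1)%N); have := incr_gt0 n n_gt0.
have := p_gt0 n.+1; have := p_small n.+1 (leqW (ltnW Mn)); nra.
Qed.

Lemma escape_eq0 y : escape y = 0.
Proof.
suff : escape y = 0 /\ escape y.+1 = 0 by case.
elim: y => [|y [e_y e_y1]]; first by rewrite !escape_lt2.
split => //; case: y e_y e_y1 => [_ _|y e_y e_y1]; first exact: escape2.
have := escape_increment (y := y.+2) isT; rewrite /= e_y e_y1 !subr0 mulr0.
by move/eqP; rewrite mulf_eq0 gt_eqF ?p_gt0 //= => /eqP.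
Qed.

End Survival.

Section Cylinders.
Variables (R : realType) (P : {measure set (Qspace R) -> \bar R}).
Hypothesis hP : noise_law P.

Definition coord (k : nat) (q : Qspace R) : R := q k.

Lemma measurable_coord k (B : set R) : measurable B -> measurable (coord k @^-1` B).
Proof. by move=> mB; apply: sub_sigma_algebra; exists k, B. Qed.

Definition cylinder (s : seq (set R)) : set (Qspace R) :=
  [set q | forall i, (i < size s)%N -> nth setT s i (q i)].

Lemma cylinder_rcons (s : seq (set R)) (B : set R) :
  cylinder (rcons s B) = cylinder s `&` coord (size s) @^-1` B.
Proof.
apply/seteqP; split => q /=.
  move=> h; split; last first.
    by have := h (size s); rewrite size_rcons nth_rcons ltnn eqxx; apply.
  by move=> i lt_i; have := h i; rewrite size_rcons nth_rcons lt_i; apply; rewrite leqW.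
case=> h hB i; rewrite size_rcons ltnS leq_eqVlt nth_rcons => /orP[/eqP ->|lt_i].
  by rewrite ltnn eqxx.
by rewrite lt_i; exact: h.
Qed.

Lemma measurable_nth_rcons (s : seq (set R)) (B : set R) :
  (forall i, measurable (nth setT s i)) -> measurable B ->
  forall i, measurable (nth setT (rcons s B) i).
Proof. by move=> ms mB i; rewrite nth_rcons; case: ifP => // _; case: ifP. Qed.

Lemma measurable_cylinder (s : seq (set R)) :
  (forall i, measurable (nth setT s i)) -> measurable (cylinder s).
Proof.
elim/last_ind: s => [|s B IH] ms.
  by have -> : cylinder [::] = setT by apply/seteqP; split.
rewrite cylinder_rcons; apply: measurableI; last first.
  by apply: measurable_coord; have := ms (size s); rewrite nth_rcons ltnn eqxx.
apply: IH => i; have [lt_i|ge_i] := ltnP i (size s); last by rewrite nth_default.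
by have := ms i; rewrite nth_rcons lt_i.
Qed.

Lemma measure_cylinder (s : seq (set R)) : (forall i, measurable (nth setT s i)) ->
  P (cylinder s) = (\prod_(B <- s) lebesgue_measure (B `&` `[0%R, 1%R]))%E.
Proof.
move=> ms; rewrite (big_nth setT) big_mkord -(proj2 hP) //.
congr (P _); apply/seteqP; split => q h i; first exact: h.
by move=> lt_i; exact: h (Ordinal lt_i).
Qed.

Lemma measure_cylinder_rcons (s : seq (set R)) (B : set R) :
  (forall i, measurable (nth setT s i)) -> measurable B ->
  P (cylinder (rcons s B)) = (P (cylinder s) * lebesgue_measure (B `&` `[0%R, 1%R]))%E.
Proof.
move=> ms mB; rewrite !measure_cylinder //; last exact: measurable_nth_rcons.
by rewrite -cats1 big_cat big_seq1.
Qed.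

Lemma lebesgue_lt_unit_le (a : R) : 0 <= a ->
  (lebesgue_measure (`]-oo, a[ `&` `[0%R, 1%R]) <= a%:E)%E.
Proof.
move=> a_ge0; apply: (@le_trans _ _ (lebesgue_measure `[0%R, a])).
  apply: le_measure; rewrite ?inE; [exact: measurableI| |] => //.
  by move=> x /=; rewrite !in_itv /= => -[x_lt /andP[x_ge0 _]]; rewrite x_ge0 ltW.
by rewrite lebesgue_measure_itv /= lte_fin; case: ltP => // _; rewrite oppr0 adde0.
Qed.

Lemma lebesgue_ge_unit_le (a : R) : a <= 1 ->
  (lebesgue_measure (`[a, +oo[ `&` `[0%R, 1%R]) <= (1 - a)%:E)%E.
Proof.
move=> a_le1; apply: (@le_trans _ _ (lebesgue_measure `[a, 1%R])).
  apply: le_measure; rewrite ?inE; [exact: measurableI| |] => //.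
  by move=> x /=; rewrite !in_itv /= andbT => -[-> /andP[_ ->]].
by rewrite lebesgue_measure_itv /= lte_fin; case: ltP => // _; rewrite lee_fin subr_ge0.
Qed.

Lemma measure_coord_ge1 k : P (coord k @^-1` [set` `[1%R, +oo[]) = 0%E.
Proof.
have ms i : measurable (nth setT (nseq k [set: R]) i) by rewrite nth_nseq; case: ifP.
have -> : coord k @^-1` [set` `[1%R, +oo[] =
          cylinder (rcons (nseq k [set: R]) [set` `[1%R, +oo[]).
  rewrite cylinder_rcons size_nseq; apply/seteqP; split => [q kq|q [] //].
  by split=> // i _; rewrite nth_nseq; case: ifP.
apply/eqP; rewrite eq_le measure_ge0 andbT measure_cylinder_rcons //.
apply: le_trans (lee_wpmul2l (measure_ge0 _ _) (lebesgue_ge_unit_le (lexx 1))) _.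
by rewrite subrr mule0.
Qed.

Variable p : nat -> R.
Hypotheses (p_gt0 : forall y, 0 < p y) (p_le1 : forall y, p y <= 1).

(* The event of [survival N y], for the chain driven by the coordinates
   k, k+1, ... of the noise. *)
Fixpoint survivors (k N y : nat) : set (Qspace R) :=
  if (y < 2)%N then set0 else
  if N is N'.+1 then
    (coord k @^-1` [set` `]-oo, p y[] `&` survivors k.+1 N' y.+1) `|`
    (coord k @^-1` [set` `[p y, +oo[] `&` survivors k.+1 N' y.-1)
  else setT.

Lemma survivorsS k N y : survivors k N.+1 y =
  if (y < 2)%N then set0 else
    (coord k @^-1` [set` `]-oo, p y[] `&` survivors k.+1 N y.+1) `|`
    (coord k @^-1` [set` `[p y, +oo[] `&` survivors k.+1 N y.-1).
Proof. by []. Qed.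

Lemma measurable_survivors k N y : measurable (survivors k N y).
Proof.
elim: N k y => [|N IH] k y /=; case: ifP => // _.
by apply: measurableU; apply: measurableI => //; exact: measurable_coord.
Qed.

Lemma measure_cylinder_survivors (s : seq (set R)) N y :
  (forall i, measurable (nth setT s i)) ->
  (P (cylinder s `&` survivors (size s) N y) <= P (cylinder s) * (survival p N y)%:E)%E.
Proof.
elim: N s y => [|N IH] s y ms.
  by rewrite /=; case: ifP => _; rewrite ?setI0 ?measure0 ?mule0 // setIT mule1.
rewrite survivorsS survivalS; case: ifP => _; first by rewrite setI0 measure0 mule0.
have mlo := measurable_nth_rcons ms (measurable_itv `]-oo, p y[).
have mhi := measurable_nth_rcons ms (measurable_itv `[p y, +oo[).
have := IH _ y.+1 mlo; have := IH _ y.-1 mhi; rewrite !size_rcons => IHhi IHlo.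
rewrite setIUr !setIA -!cylinder_rcons.
apply: le_trans (measureU2 _ _ _) _; try by apply: measurableI;
  [exact: measurable_cylinder | exact: measurable_survivors].
apply: le_trans (leeD IHlo IHhi) _.
rewrite !measure_cylinder_rcons // -!muleA -ge0_muleDr; first last.
- by apply: mule_ge0; rewrite ?lee_fin ?survival_ge0.
- by apply: mule_ge0; rewrite ?lee_fin ?survival_ge0.
apply: lee_wpmul2l; first exact: measure_ge0.
rewrite EFinD !EFinM; apply: leeD; apply: lee_pmul; rewrite ?lee_fin ?survival_ge0 //.
- exact: lebesgue_lt_unit_le (ltW (p_gt0 y)).
- exact: lebesgue_ge_unit_le (p_le1 y).
Qed.

Definition escaping (y : nat) : set (Qspace R) := \bigcap_N survivors 0 N y.

Hypothesis p_lt1 : forall y, (2 <= y)%N -> p y < 1.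
Hypothesis p_le_half : exists M, forall y, (M <= y)%N -> p y <= 2^-1.

Lemma measure_escaping y : P (escaping y) = 0%E.
Proof.
have escaping_le N : (P (escaping y) <= (survival p N y)%:E)%E.
  have cyl0 : cylinder [::] = setT by apply/seteqP; split.
  apply: (@le_trans _ _ (P (cylinder [::] `&` survivors 0 N y))).
    apply: le_measure; rewrite ?inE; last by rewrite cyl0 setTI => q; apply.
      by apply: bigcapT_measurable => n; exact: measurable_survivors.
    by apply: measurableI; [rewrite cyl0 | exact: measurable_survivors].
  apply: le_trans (measure_cylinder_survivors _ _ _) _ => [i|].
    by rewrite nth_nil.
  by rewrite cyl0 (proj1 hP) mul1e.
have fin : P (escaping y) \is a fin_num.
  rewrite ge0_fin_numE ?measure_ge0 //; apply: le_lt_trans (escaping_le 0%N) _.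
  exact: ltry.
rewrite -(fineK fin); congr EFin; apply/eqP; rewrite eq_le; apply/andP; split.
  rewrite -(escape_eq0 p_gt0 p_le1 p_lt1 p_le_half y).
  apply: limr_ge; first exact: survival_cvg.
  by near=> N; rewrite -lee_fin fineK.
by rewrite -lee_fin fineK // measure_ge0.
Unshelve. all: by end_near.
Qed.

End Cylinders.

Section Synchronization.
Variables (R : realType) (g1 g2 : R).
Hypotheses (g1_gt0 : 0 < g1) (g2_gt0 : 0 < g2).
Variable P : {measure set (Qspace R) -> \bar R}.
Hypothesis hP : noise_law P.

Lemma survivors_phi N k y (q : noise R) :
  (forall n, (n <= N)%N -> (2 <= phi g1 g2 n (iter k (@theta R) q) y)%N) ->
  survivors (birth_prob g1 g2) k N y q.
Proof.
elim: N k y => [|N IH] k y above; have /= y2 := above 0%N isT.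
  by rewrite /= ltnNge y2.
have above_next n : (n <= N)%N ->
    (2 <= phi g1 g2 n (iter k.+1 (@theta R) q) (fq g1 g2 (iter k (@theta R) q) y))%N.
  by move=> nN; have := above n.+1 nN; rewrite phiS.
rewrite /= ltnNge y2; move: above_next; rewrite fqE iter_theta add0n.
by case: ltP => qk above_next; [left | right]; split; rewrite /= ?in_itv /= ?qk //;
  exact: IH.
Qed.

Lemma phi_synchronizing_ae x y : odd x = odd y ->
  {ae P, forall q : Qspace R, exists n0, phi g1 g2 n0 q x = phi g1 g2 n0 q y}.
Proof.
wlog xy : x y / (x <= y)%N.
  move=> sync oxy; have [xy|yx] := leqP x y; first exact: sync xy oxy.
  apply: filterS (sync y x (ltnW yx) (esym oxy)) => q [n eq_n].
  by exists n.
move=> oxy.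
apply: (@negligibleS _ _ _ P
  ((\bigcup_k coord k @^-1` [set` `[1%R, +oo[]) `|` escaping (birth_prob g1 g2) y)).
  move=> q /= no_meet.
  have [[k qk]|q_lt1] := pselect (exists k, 1 <= q k).
    by left; exists k => //=; rewrite in_itv /= qk.
  right => N _; apply: survivors_phi => n _.
  apply: (phi_ge2_of_no_meet g1_gt0 _ xy oxy no_meet) => k.
  by rewrite ltNge; apply/negP => qk; apply: q_lt1; exists k.
apply: negligibleU.
  apply: negligible_bigcup => k; apply/negligibleP.
    exact: measurable_coord.
  exact: measure_coord_ge1.
apply/negligibleP.
  by apply: bigcapT_measurable => n; exact: measurable_survivors.
apply: measure_escaping => //.
- exact: birth_prob_gt0.
- exact: birth_prob_le1.
- by move=> z z2; apply: birth_prob_lt1 => //; exact: ltnW.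
- exact: birth_prob_le_half.
Qed.

End Synchronization.

Lemma W01_partition :
  (forall x, exists i, W01 i x) /\ (forall i j x, W01 i x -> W01 j x -> i = j) /\
  (forall i, W01 i !=set0).
Proof.
split.
  by move=> x; exists (inord (odd x)); rewrite /W01 /= inordK //; case: (odd x).
split; last by move=> i; exists (val i); rewrite /W01 /=; case: i => [[|[|]]].
move=> i j x; rewrite /W01 /= => -> /eqP.
by case: i => [[|[|]]] //= ?; case: j => [[|[|]]] //= ? _; apply: val_inj.
Qed.

Theorem corollary3p4 (R : realType) (g1 g2 : R) (hg1 : 0 < g1) (hg2 : 0 < g2)
  (P : {measure set (Qspace R) -> \bar R}) (hP : noise_law P) :
  partially_synchronizing P (phi g1 g2) W01.
Proof.
split; first exact: W01_partition.
move=> i x y; rewrite /W01 /= => ox oy.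
by apply: phi_synchronizing_ae => //; rewrite ox oy.
Qed.
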